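(* (1) For every model $\mathfrak M$: $\mathfrak M\in\mathcal D_{P-}$ iff every sequent $(\{p\},((\bot\to\bot)\to\bot)\to p)$, $p\in P0$, is valid in $\mathfrak M$. (2) For every model $\mathfrak M$ with symmetric relation: $\mathfrak M$ is an interpretation iff every sequent $(\{p\},((p\to\bot)\to\bot)\to p)$, $p\in P0$, is valid in $\mathfrak M$. (3) For every model $\mathfrak M$ with transitive relation: $\mathfrak M$ is an interpretation iff every sequent $(\{p\},(\bot\to\bot)\to p)$, $p\in P0$, is valid in $\mathfrak M$.
   Context: Fix a countable set $P0$ of propositional variables; $Form$: $\varphi::=p\mid\bot\mid(\varphi\wedge\varphi)\mid(\varphi\to\varphi)$. A model is $\mathfrak M=(W,R,V)$ with $W\neq\emptyset$, $R\subseteq W\times W$, $V:P0\to\wp(W)$. Satisfaction: $\bot$ never true; $p$ true at $s$ iff $s\in V(p)$; $\wedge$ pointwise; $\mathfrak M,s\models\varphi\to\psi$ iff for all $t$ with $sRt$, $\mathfrak M,t\models\varphi$ implies $\mathfrak M,t\models\psi$. A sequent $(\Gamma,\varphi)$ ($\Gamma\subseteq Form$) is valid in $\mathfrak M$ iff for every $s\in W$, if $s$ satisfies all members of $\Gamma$ then $s$ satisfies $\varphi$. For $X\subseteq W$: $-X=W\setminus X$, $R[X]=\{t:\exists s\in X,\ sRt\}$, $R^\Box(X)=\{s:\forall t\,(sRt\Rightarrow t\in X)\}$. A proposition of $(W,R)$ is $X\subseteq W$ with $R[X]\cap R^\Box(R[X])\subseteq X$; an interpretation is a model with $V(p)$ a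 proposition for every $p$. $\mathcal D_{P-}$ is the class of models $(W,R,V)$ such that $V(p)\subseteq R^\Box(-R^\Box(\emptyset)\cup V(p))$ for all $p\in P0$. *)

Definition P0 := nat.

Inductive Form : Type :=
| Var : P0 -> Form
| Bot : Form
| And : Form -> Form -> Form
| Imp : Form -> Form -> Form.

Record Model : Type := {
  W : Type;
  W_ne : inhabited W;
  R : W -> W -> Prop;
  V : P0 -> W -> Prop
}.

Fixpoint sat (M : Model) (s : W M) (phi : Form) : Prop :=
  match phi with
  | Var p => V M p s
  | Bot => False
  | And a b => sat M s a /\ sat M s b
  | Imp a b => forall t, R M s t -> sat M t a -> sat M t b
  end.

Definition valid_seq (M : Model) (Gamma : Form -> Prop) (phi : Form) : Prop :=
  forall s : W M, (forall g, Gamma g -> sat M s g) -> sat M s phi.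

Definition singleton (a : Form) : Form -> Prop := fun g => g = a.

Definition compl {T : Type} (X : T -> Prop) : T -> Prop := fun s => ~ X s.
Definition emptyset {T : Type} : T -> Prop := fun _ => False.
Definition subset {T : Type} (X Y : T -> Prop) : Prop := forall s, X s -> Y s.
Definition img {T : Type} (Rel : T -> T -> Prop) (X : T -> Prop) : T -> Prop :=
  fun t => exists s, X s /\ Rel s t.
Definition box {T : Type} (Rel : T -> T -> Prop) (X : T -> Prop) : T -> Prop :=
  fun s => forall t, Rel s t -> X t.
Definition is_proposition {T : Type} (Rel : T -> T -> Prop) (X : T -> Prop) : Prop :=
  subset (fun s => img Rel X s /\ box Rel (img Rel X) s) X.

Definition is_interpretation (M : Model) : Prop :=
  forall p : P0, is_proposition (R M) (V M p).

Definition in_DPminus (M : Model) : Prop :=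
  forall p : P0,
    subset (V M p)
      (box (R M) (fun t => compl (box (R M) (@emptyset (W M))) t \/ V M p t)).

Definition symmetric_model (M : Model) : Prop := forall s t, R M s t -> R M t s.
Definition transitive_model (M : Model) : Prop :=
  forall s t u, R M s t -> R M t u -> R M s u.

From Stdlib Require Import Classical Setoid Relation_Definitions.

(* Each sequent ({p}, phi -> p) says that every successor of a p-world satisfying
   phi is again a p-world, while V p is a proposition iff every successor of a
   p-world lying in R^Box(R[V p]) is a p-world.  So it suffices to compute the
   truth sets of the antecedents: (bot -> bot) -> bot holds exactly at the dead
   ends; under symmetry the double negation of p holds exactly on R^Box(R[V p]);
   under transitivity every successor of a p-world lies in R^Box(R[V p]), so
   the antecedent can be the trivial bot -> bot. *)

Lemma valid_seq_singleton (M : Model) (a phi : Form) :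
  valid_seq M (singleton a) phi <-> forall s, sat M s a -> sat M s phi.
Proof.
  split; intros H s Hs.
  - apply H; intros g ->; exact Hs.
  - apply H, Hs; reflexivity.
Qed.

Lemma sat_Imp_top (M : Model) (s : W M) (phi : Form) :
  sat M s (Imp (Imp Bot Bot) phi) <-> box (R M) (fun t => sat M t phi) s.
Proof.
  split; intros H t Hst.
  - apply (H t Hst); intros u _ [].
  - intros _; exact (H t Hst).
Qed.

Lemma sat_neg_neg_symmetric (M : Model) :
  symmetric_model M -> forall (s : W M) (phi : Form),
  sat M s (Imp (Imp phi Bot) Bot) <-> box (R M) (img (R M) (fun t => sat M t phi)) s.
Proof.
  intros Hsym s phi; split.
  - intros H t Hst; apply NNPP; intros Hn.
    apply (H t Hst); intros u Htu Hu; apply Hn.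
    exists u; split; [exact Hu | exact (Hsym _ _ Htu)].
  - intros H t Hst Hneg; destruct (H t Hst) as [u [Hu Hut]].
    exact (Hneg u (Hsym _ _ Hut) Hu).
Qed.

Lemma is_propositionE {T : Type} (Rel : T -> T -> Prop) (X : T -> Prop) :
  is_proposition Rel X <->
  forall s, X s -> box Rel (fun t => box Rel (img Rel X) t -> X t) s.
Proof.
  split.
  - intros H s Hs t Hst Ht; apply H; split; [exists s; split |]; assumption.
  - intros H t [[s [Hs Hst]] Ht]; exact (H s Hs t Hst Ht).
Qed.

Lemma is_proposition_transitive {T : Type} (Rel : T -> T -> Prop) (X : T -> Prop) :
  transitive T Rel -> is_proposition Rel X <-> forall s, X s -> box Rel X s.
Proof.
  intros Htr; rewrite is_propositionE; split; intros H s Hs t Hst.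
  - apply (H s Hs t Hst); intros u Htu; exists s; split; [exact Hs | exact (Htr _ _ _ Hst Htu)].
  - intros _; exact (H s Hs t Hst).
Qed.

Lemma in_DPminusE (M : Model) :
  in_DPminus M <->
  forall p s, V M p s -> box (R M) (fun t => box (R M) emptyset t -> V M p t) s.
Proof.
  split; intros H p s Hs t Hst.
  - intros Hdead; destruct (H p s Hs t Hst) as [Halive | Hp]; [contradiction | exact Hp].
  - destruct (classic (box (R M) emptyset t)) as [Hdead | Halive].
    + right; exact (H p s Hs t Hst Hdead).
    + left; exact Halive.
Qed.

Theorem mainTheorem4 :
  (forall M : Model,
      in_DPminus M <->
      (forall p : P0, valid_seq M (singleton (Var p))
                        (Imp (Imp (Imp Bot Bot) Bot) (Var p)))) /\
  (forall M : Model, symmetric_model M ->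
      (is_interpretation M <->
       (forall p : P0, valid_seq M (singleton (Var p))
                         (Imp (Imp (Imp (Var p) Bot) Bot) (Var p))))) /\
  (forall M : Model, transitive_model M ->
      (is_interpretation M <->
       (forall p : P0, valid_seq M (singleton (Var p))
                         (Imp (Imp Bot Bot) (Var p))))).
Proof.
  split; [| split]; intros M; setoid_rewrite valid_seq_singleton.
  - rewrite in_DPminusE; split; intros H p s Hs t Hst Ht;
      apply (H p s Hs t Hst), (sat_Imp_top M t Bot), Ht.
  - intros Hsym; unfold is_interpretation; setoid_rewrite is_propositionE.
    split; intros H p s Hs t Hst Ht;
      apply (H p s Hs t Hst), (sat_neg_neg_symmetric M Hsym t (Var p)), Ht.
  - intros Htr; unfold is_interpretation.
    setoid_rewrite (is_proposition_transitive (R M) _ Htr).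
    setoid_rewrite sat_Imp_top; reflexivity.
Qed.
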